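(* Let $i\ge1$ and let $(a_j)_{j\ge1}$ satisfy $0<a_j\le Aj$ for some $A>0$. Let $y_0\in\mathcal X^+_{1,i}$ with $y_{i,0}>0$, and let $y$ be the solution of $dy/dt=F(y)$, $y(0)=y_0$. Then there exist $t_*\in(0,\infty]$ and $t_{*,1}\in[t_*,\infty]$ such that: - $y_i(t)>0$ for $t\in[0,t_* )$, and $y_i(t_* )=0$ if $t_*<\infty$; - $y_{ki}(t)>0$ for $t\in(0,t_* )$ and all $k\ge2$; - $y_j(t)\ge0$ for $t\in[0,t_* )$ and $j\ge i+1$; - $y_j(t)>0$ for $t\in[0,t_* )$ whenever $j\ge i+1$ and $y_{j,0}>0$; - $\frac{dy_i}{dt}(t)<0$ for $t\in[0,t_{*,1})$; - $\|y(t)\|_{1,1}=\|y_0\|_{1,1}$ for $t\in[0,t_* )$. If $t_*<\infty$, then $t_{*,1}>t_*$, and the second, third, fourth and last properties also hold at $t=t_*$.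
   Context: $\|x\|_{1,1}=\sum_j j|x_j|$, $\mathcal X_{1,1}=\{x:\|x\|_{1,1}<\infty\}$, $\mathcal X_{1,i}=\{x\in\mathcal X_{1,1}:x_j=0 \text{ for } j<i\}$, and $\mathcal X^+_{1,i}$ is the subset with nonnegative entries. $F$ is defined by - $F_j(y)=0$ for $j<i$; - $F_i(y)=-a_iy_i-\sum_{j\ge i}a_jy_j$; - $F_j(y)=a_{j-i}y_{j-i}-a_jy_j$ for $j\ge i+1$. The solution $y\in C([0,\infty);\mathcal X_{1,i})$, with $C^1$ components, exists and is unique. *)

From Stdlib Require Import Reals Lra Lia Arith ClassicalEpsilon.
Open Scope R_scope.

(* Value of a real series (meaningful when it converges; chosen arbitrarily otherwise). *)
Definition series_sum (u : nat -> R) : R :=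
  epsilon (inhabits 0%R) (fun l => infinite_sum u l).

Definition norm11 (x : nat -> R) : R :=
  series_sum (fun j => INR j * Rabs (x j)).

Definition X11 (x : nat -> R) : Prop :=
  exists l, infinite_sum (fun j => INR j * Rabs (x j)) l.

Definition X1i (i : nat) (x : nat -> R) : Prop :=
  X11 x /\ (forall j, (j < i)%nat -> x j = 0).

Definition X1i_pos (i : nat) (x : nat -> R) : Prop :=
  X1i i x /\ (forall j, 0 <= x j).

Definition F (i : nat) (a : nat -> R) (y : nat -> R) (j : nat) : R :=
  if (j <? i)%nat then 0
  else if (j =? i)%nat then
    - a i * y i - series_sum (fun k => if (i <=? k)%nat then a k * y k else 0)
  else a (j - i)%nat * y (j - i)%nat - a j * y j.

Definition has_deriv_nonneg (f f' : R -> R) : Prop :=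
  forall t, 0 <= t -> forall eps, 0 < eps -> exists delta, 0 < delta /\
    forall h, h <> 0 -> 0 <= t + h -> Rabs h < delta ->
      Rabs ((f (t + h) - f t) / h - f' t) < eps.

Definition cont_nonneg (g : R -> R) : Prop :=
  forall t, 0 <= t -> forall eps, 0 < eps -> exists delta, 0 < delta /\
    forall s, 0 <= s -> Rabs (s - t) < delta -> Rabs (g s - g t) < eps.

Definition cont_X11_nonneg (y : R -> nat -> R) : Prop :=
  forall t, 0 <= t -> forall eps, 0 < eps -> exists delta, 0 < delta /\
    forall s, 0 <= s -> Rabs (s - t) < delta ->
      norm11 (fun j => y s j - y t j) < eps.

Definition is_solution (i : nat) (a : nat -> R) (y0 : nat -> R)
    (y : R -> nat -> R) : Prop :=
  y 0 = y0 /\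
  (forall t, 0 <= t -> X1i i (y t)) /\
  cont_X11_nonneg y /\
  (forall j, has_deriv_nonneg (fun t => y t j) (fun t => F i a (y t) j)) /\
  (forall j, cont_nonneg (fun t => F i a (y t) j)).

(* Extended times in (0, oo]: None stands for +oo. *)
Definition before (T : option R) (t : R) : Prop :=
  match T with Some s => t < s | None => True end.

Definition ext_le (T1 T2 : option R) : Prop :=
  match T1, T2 with
  | _, None => True
  | None, Some _ => False
  | Some s1, Some s2 => s1 <= s2
  end.

(* As long as [y_i >= 0] on [[0, T]], every component with [j > i]
   stays nonnegative (positive if initially positive), because the integrating
   factor makes [exp (a_j t) y_j(t)] nondecreasing once [y_{j-i} >= 0]
   (induction on [j]); for the same reason the multiples [y_{ki}], fed by
   [y_{(k-1)i}], become positive at once.  On such an interval [norm11] is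
   conserved: the capped moments [sum_j min (j, N) y_j] do not increase, which
   gives [norm11 (y t) <= norm11 y0] as [N -> oo]; their decrease is bounded by
   the tails of [y], which are uniformly small on compact time intervals, which
   gives the converse.  Finally [F_i <= - a_i y_i - a_{2i} y_{2i}], so
   [dy_i/dt < 0] while [y_i > 0], and also at the first zero [t_*] of [y_i]
   (where [y_{2i} > 0]), hence, by continuity, on some [[t_*, t_{*,1})]. *)

From Stdlib Require Import Reals.
Open Scope R_scope.
From Stdlib Require Import Lra Lia Psatz Arith ClassicalEpsilon Classical
  FunctionalExtensionality.

Lemma series_sum_spec (u : nat -> R) (l : R) :
  infinite_sum u l -> series_sum u = l.
Proof.
  intros Hl. unfold series_sum.
  apply (uniqueness_sum u); [|exact Hl].
  exact (epsilon_spec (inhabits 0) (fun l => infinite_sum u l) (ex_intro _ l Hl)).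
Qed.

Lemma Un_cv_const (c : R) : Un_cv (fun _ => c) c.
Proof.
  intros e He; exists 0%nat; intros; unfold Rdist.
  rewrite Rminus_diag, Rabs_R0; lra.
Qed.

Lemma partial_sum_nonneg (u : nat -> R) (n : nat) :
  (forall k, 0 <= u k) -> 0 <= sum_f_R0 u n.
Proof. intros Hu. induction n; simpl; [apply Hu | specialize (Hu (S n)); lra]. Qed.

Lemma partial_sum_mono (u : nat -> R) (n m : nat) :
  (forall k, 0 <= u k) -> (n <= m)%nat -> sum_f_R0 u n <= sum_f_R0 u m.
Proof. intros Hu Hnm. induction Hnm; simpl; [lra | specialize (Hu (S m)); lra]. Qed.

Lemma term_le_partial_sum (u : nat -> R) (n : nat) :
  (forall k, 0 <= u k) -> u n <= sum_f_R0 u n.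
Proof.
  intros Hu. destruct n; simpl; [lra|].
  pose proof (partial_sum_nonneg u n Hu); lra.
Qed.

Lemma partial_sum_truncate (f : nat -> R) (n m : nat) : (n <= m)%nat ->
  sum_f_R0 (fun k => if (k <=? n)%nat then f k else 0) m = sum_f_R0 f n.
Proof.
  intros H. induction H.
  - apply sum_eq. intros k Hk. now replace (k <=? n)%nat with true
      by (symmetry; apply Nat.leb_le; lia).
  - rewrite tech5, IHle.
    replace (S m <=? n)%nat with false by (symmetry; apply Nat.leb_gt; lia). ring.
Qed.

Lemma nonneg_series_bounded (u : nat -> R) (C : R) :
  (forall k, 0 <= u k) -> (forall n, sum_f_R0 u n <= C) ->
  exists l, infinite_sum u l.
Proof.
  intros Hu HC.
  assert (Hg : Un_growing (sum_f_R0 u)) by (intro n; simpl; specialize (Hu (S n)); lra).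
  assert (Hb : has_ub (sum_f_R0 u)) by (exists C; intros x [n ->]; apply HC).
  destruct (growing_cv _ Hg Hb) as [l Hl]. now exists l.
Qed.

Lemma infinite_sum_plus (u v : nat -> R) (lu lv : R) :
  infinite_sum u lu -> infinite_sum v lv ->
  infinite_sum (fun k => u k + v k) (lu + lv).
Proof.
  intros Hu Hv e He. destruct (CV_plus _ _ _ _ Hu Hv e He) as [N HN].
  exists N. intros n Hn. rewrite plus_sum. now apply HN.
Qed.

Lemma sum_scal_l (c : R) (f : nat -> R) (n : nat) :
  sum_f_R0 (fun k => c * f k) n = c * sum_f_R0 f n.
Proof. rewrite scal_sum. apply sum_eq; intros; ring. Qed.

Lemma infinite_sum_scal (c : R) (u : nat -> R) (lu : R) :
  infinite_sum u lu -> infinite_sum (fun k => c * u k) (c * lu).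
Proof.
  intros Hu e He. destruct (CV_mult _ _ _ _ (Un_cv_const c) Hu e He) as [N HN].
  exists N. intros n Hn. rewrite sum_scal_l. now apply HN.
Qed.

Lemma infinite_sum_le (u v : nat -> R) (lu lv : R) :
  (forall k, u k <= v k) -> infinite_sum u lu -> infinite_sum v lv -> lu <= lv.
Proof. intros H. apply Rle_cv_lim. intro n. now apply sum_Rle. Qed.

Lemma infinite_sum_tail_le (u v : nat -> R) (lu lv : R) (n : nat) :
  (forall k, u k <= v k) -> infinite_sum u lu -> infinite_sum v lv ->
  lu - sum_f_R0 u n <= lv - sum_f_R0 v n.
Proof.
  intros H Hu Hv.
  apply (Rle_cv_lim (Un := fun m => sum_f_R0 u (m + n) - sum_f_R0 u n)
                    (Vn := fun m => sum_f_R0 v (m + n) - sum_f_R0 v n)).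
  - intro m. assert (Hd : sum_f_R0 (fun k => v k - u k) n
                          <= sum_f_R0 (fun k => v k - u k) (m + n)).
    { apply partial_sum_mono; [intro k; specialize (H k); lra | lia]. }
    rewrite !minus_sum in Hd. lra.
  - exact (CV_minus _ _ _ _ (CV_shift' _ n _ Hu) (Un_cv_const _)).
  - exact (CV_minus _ _ _ _ (CV_shift' _ n _ Hv) (Un_cv_const _)).
Qed.

(** The weighted norm [norm11]. *)

Definition moment (x : nat -> R) (k : nat) : R := INR k * Rabs (x k).

Definition vsub (x z : nat -> R) (k : nat) : R := x k - z k.

Lemma moment_nonneg (x : nat -> R) (k : nat) : 0 <= moment x k.
Proof. apply Rmult_le_pos; [apply pos_INR | apply Rabs_pos]. Qed.

Lemma moment_triangle (x z : nat -> R) (k : nat) :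
  moment x k <= moment z k + moment (vsub x z) k.
Proof.
  unfold moment, vsub. rewrite <- Rmult_plus_distr_l.
  apply Rmult_le_compat_l; [apply pos_INR|].
  replace (x k) with (z k + (x k - z k)) at 1 by ring. apply Rabs_triang.
Qed.

Lemma norm11_spec (x : nat -> R) : X11 x -> infinite_sum (moment x) (norm11 x).
Proof. intros [l Hl]. unfold norm11. now rewrite (series_sum_spec _ _ Hl). Qed.

Lemma X11_vsub (x z : nat -> R) : X11 x -> X11 z -> X11 (vsub x z).
Proof.
  intros Hx%norm11_spec Hz%norm11_spec.
  apply (nonneg_series_bounded _ (norm11 x + norm11 z)); [apply moment_nonneg|].
  intro n. apply Rle_trans with (sum_f_R0 (fun k => moment x k + moment z k) n).
  - apply sum_Rle. intros k _. unfold moment, vsub. rewrite <- Rmult_plus_distr_l.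
    apply Rmult_le_compat_l; [apply pos_INR|].
    unfold Rminus. rewrite <- (Rabs_Ropp (z k)). apply Rabs_triang.
  - rewrite plus_sum.
    pose proof (sum_incr _ n _ Hx (moment_nonneg x)).
    pose proof (sum_incr _ n _ Hz (moment_nonneg z)). lra.
Qed.

Lemma norm11_vsub_sym (x z : nat -> R) : norm11 (vsub x z) = norm11 (vsub z x).
Proof.
  unfold norm11. f_equal. apply functional_extensionality. intro k.
  unfold vsub. now rewrite Rabs_minus_sym.
Qed.

Lemma norm11_triangle (x z : nat -> R) :
  X11 x -> X11 z -> norm11 x <= norm11 z + norm11 (vsub x z).
Proof.
  intros Hx Hz. pose proof (norm11_spec _ (X11_vsub x z Hx Hz)).
  apply (infinite_sum_le _ _ _ _ (moment_triangle x z)); [now apply norm11_spec|].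
  apply infinite_sum_plus; [now apply norm11_spec | assumption].
Qed.

Definition tail (n : nat) (x : nat -> R) : R := norm11 x - sum_f_R0 (moment x) n.

Lemma tail_triangle (x z : nat -> R) (n : nat) :
  X11 x -> X11 z -> tail n x <= tail n z + norm11 (vsub x z).
Proof.
  intros Hx Hz. pose proof (norm11_spec _ (X11_vsub x z Hx Hz)) as Hd.
  pose proof (infinite_sum_tail_le _ _ _ _ n (moment_triangle x z) (norm11_spec _ Hx)
    (infinite_sum_plus _ _ _ _ (norm11_spec _ Hz) Hd)) as H.
  unfold tail. rewrite plus_sum in H.
  pose proof (partial_sum_nonneg (moment (vsub x z)) n (moment_nonneg _)). lra.
Qed.

Lemma tail_eventually_small (x : nat -> R) (e : R) : X11 x -> 0 < e ->
  exists N, forall n, (N <= n)%nat -> tail n x <= e.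
Proof.
  intros Hx He. destruct (norm11_spec _ Hx e He) as [N HN]. exists N.
  intros n Hn. specialize (HN n Hn). unfold Rdist in HN. apply Rabs_def2 in HN.
  unfold tail. lra.
Qed.

Lemma deriv_nonneg_interior (f f' : R -> R) (t : R) :
  has_deriv_nonneg f f' -> 0 < t -> derivable_pt_lim f t (f' t).
Proof.
  intros H Ht e He. destruct (H t (Rlt_le _ _ Ht) e He) as [d [Hd Hh]].
  assert (Hm : 0 < Rmin d t) by (apply Rmin_pos; lra).
  exists (mkposreal _ Hm). intros h Hh0 Hhd. simpl in Hhd.
  pose proof (Rmin_l d t). pose proof (Rmin_r d t).
  apply Hh; [exact Hh0 | | lra].
  assert (Rabs h < t) by lra. apply Rabs_def2 in H2. lra.
Qed.

Lemma deriv_nonneg_continuous (f f' : R -> R) :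
  has_deriv_nonneg f f' -> cont_nonneg f.
Proof.
  intros H t Ht e He. destruct (H t Ht 1 Rlt_0_1) as [d [Hd Hh]].
  set (K := Rabs (f' t) + 1).
  assert (HK : 0 < K) by (unfold K; pose proof (Rabs_pos (f' t)); lra).
  exists (Rmin d (e / K)). split; [apply Rmin_pos; [lra | apply Rdiv_lt_0_compat; lra]|].
  intros s Hs Hst.
  destruct (Req_dec s t) as [->|Hne]; [rewrite Rminus_diag, Rabs_R0; lra|].
  pose proof (Rmin_l d (e / K)). pose proof (Rmin_r d (e / K)).
  specialize (Hh (s - t) ltac:(lra) ltac:(replace (t + (s - t)) with s by ring; lra) ltac:(lra)).
  replace (t + (s - t)) with s in Hh by ring.
  assert (Hq : Rabs ((f s - f t) / (s - t)) < K).
  { replace ((f s - f t) / (s - t)) with (((f s - f t) / (s - t) - f' t) + f' t) by ring.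
    pose proof (Rabs_triang ((f s - f t) / (s - t) - f' t) (f' t)). unfold K. lra. }
  replace (f s - f t) with ((f s - f t) / (s - t) * (s - t)) by (field; lra).
  rewrite Rabs_mult.
  apply Rle_lt_trans with (K * Rabs (s - t)).
  - apply Rmult_le_compat_r; [apply Rabs_pos | lra].
  - apply Rlt_le_trans with (K * (e / K)); [apply Rmult_lt_compat_l; lra | right; field; lra].
Qed.

Lemma cont_nonneg_pos_near (g : R -> R) (c : R) : cont_nonneg g -> 0 <= c -> 0 < g c ->
  exists d, 0 < d /\ forall u, 0 <= u -> Rabs (u - c) < d -> 0 < g u.
Proof.
  intros Hg Hc Hpos. destruct (Hg c Hc (g c) Hpos) as [d [Hd Hcl]].
  exists d. split; [exact Hd|]. intros u Hu Huc.
  specialize (Hcl u Hu Huc). apply Rabs_def2 in Hcl. lra.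
Qed.

Lemma cont_nonneg_neg_near (g : R -> R) (c : R) : cont_nonneg g -> 0 <= c -> g c < 0 ->
  exists d, 0 < d /\ forall u, 0 <= u -> Rabs (u - c) < d -> g u < 0.
Proof.
  intros Hg Hc Hneg. destruct (Hg c Hc (- g c) ltac:(lra)) as [d [Hd Hcl]].
  exists d. split; [exact Hd|]. intros u Hu Huc.
  specialize (Hcl u Hu Huc). apply Rabs_def2 in Hcl. lra.
Qed.

Lemma right_of_zero (P : R -> Prop) (t : R) : 0 < t ->
  (exists d, 0 < d /\ forall s, 0 <= s -> Rabs (s - 0) < d -> P s) ->
  exists s, 0 < s < t /\ P s.
Proof.
  intros Ht [d [Hd HP]]. pose proof (Rmin_l (d / 2) (t / 2)). pose proof (Rmin_r (d / 2) (t / 2)).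
  assert (Hs : 0 < Rmin (d / 2) (t / 2)) by (apply Rmin_pos; lra).
  exists (Rmin (d / 2) (t / 2)). split; [lra|].
  apply HP; [lra | rewrite Rminus_0_r, Rabs_right; lra].
Qed.

Lemma first_zero (g : R -> R) : cont_nonneg g -> 0 < g 0 ->
  (forall t, 0 <= t -> 0 < g t) \/
  exists c, 0 < c /\ g c = 0 /\ forall u, 0 <= u < c -> 0 < g u.
Proof.
  intros Hg Hg0.
  destruct (classic (exists t, 0 <= t /\ g t <= 0)) as [[t1 [Ht1 Hgt1]]|Hnone].
  2: { left. intros t Ht. apply Rnot_le_lt. intro. apply Hnone. eauto. }
  right.
  set (E := fun s => 0 <= s /\ forall u, 0 <= u <= s -> 0 < g u).
  destruct (completeness E) as [c [Hub Hlub]].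
  { exists t1. intros s [Hs0 Hs]. apply Rnot_lt_le. intro. specialize (Hs t1 ltac:(lra)). lra. }
  { exists 0. split; [lra|]. intros u Hu. now replace u with 0 by lra. }
  assert (Hbefore : forall u, 0 <= u < c -> 0 < g u).
  { intros u Hu. apply Rnot_le_lt. intro Hn. assert (c <= u); [|lra].
    apply Hlub. intros s [Hs0 Hs]. apply Rnot_lt_le. intro. specialize (Hs u ltac:(lra)). lra. }
  assert (Hc0 : 0 < c).
  { destruct (cont_nonneg_pos_near g 0 Hg (Rle_refl 0) Hg0) as [d [Hd Hpos]].
    assert (d / 2 <= c); [|lra]. apply Hub. split; [lra|].
    intros u Hu. apply Hpos; [lra | rewrite Rminus_0_r, Rabs_right; lra]. }
  exists c. split; [exact Hc0|]. split; [|exact Hbefore].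
  apply Rle_antisym; apply Rnot_lt_le; intro Hsign.
  - (* a positive value at [c] would extend the positivity interval beyond [c] *)
    destruct (cont_nonneg_pos_near g c Hg ltac:(lra) Hsign) as [d [Hd Hpos]].
    assert (c + d / 2 <= c); [|lra]. apply Hub. split; [lra|]. intros u Hu.
    destruct (Rlt_le_dec u c); [apply Hbefore; lra | apply Hpos; [lra | apply Rabs_def1; lra]].
  - (* a negative value at [c] would make [g] negative just before [c] *)
    destruct (cont_nonneg_neg_near g c Hg ltac:(lra) Hsign) as [d [Hd Hneg]].
    pose proof (Rmax_l 0 (c - d / 2)). pose proof (Rmax_r 0 (c - d / 2)).
    set (u := Rmax 0 (c - d / 2)) in *.
    assert (Huc : u < c) by (unfold u; apply Rmax_lub_lt; lra).
    specialize (Hneg u ltac:(lra) ltac:(apply Rabs_def1; lra)).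
    specialize (Hbefore u ltac:(lra)). lra.
Qed.

Lemma nondecreasing_of_deriv (f f' : R -> R) (s t : R) : s < t ->
  (forall c, s <= c <= t -> derivable_pt_lim f c (f' c)) ->
  (forall c, s < c < t -> 0 <= f' c) -> f s <= f t.
Proof.
  intros Hst Hd Hp. destruct (MVT_cor2 f f' s t Hst Hd) as [c [Hc Hc2]].
  pose proof (Rmult_le_pos (f' c) (t - s) (Hp c Hc2) ltac:(lra)). lra.
Qed.

Lemma increasing_of_deriv (f f' : R -> R) (s t : R) : s < t ->
  (forall c, s <= c <= t -> derivable_pt_lim f c (f' c)) ->
  (forall c, s < c < t -> 0 < f' c) -> f s < f t.
Proof.
  intros Hst Hd Hp. destruct (MVT_cor2 f f' s t Hst Hd) as [c [Hc Hc2]].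
  pose proof (Rmult_lt_0_compat (f' c) (t - s) (Hp c Hc2) ltac:(lra)). lra.
Qed.

Lemma weighted_sum_deriv (g : R -> nat -> R) (g' : nat -> R) (w : nat -> R) (t : R) (L : nat) :
  (forall j, derivable_pt_lim (fun u => g u j) t (g' j)) ->
  derivable_pt_lim (fun u => sum_f_R0 (fun j => w j * g u j) L) t
    (sum_f_R0 (fun j => w j * g' j) L).
Proof.
  intros H. induction L as [|L IH]; simpl.
  - apply (derivable_pt_lim_scal (fun u => g u 0%nat)), H.
  - apply (derivable_pt_lim_plus (fun u => sum_f_R0 (fun j => w j * g u j) L)
             (fun u => w (S L) * g u (S L))); [exact IH|].
    apply (derivable_pt_lim_scal (fun u => g u (S L))), H.
Qed.

Lemma linear_deriv (c t : R) : derivable_pt_lim (fun u => c * u) t c.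
Proof.
  pose proof (derivable_pt_lim_scal id c t 1 (derivable_pt_lim_id t)) as H.
  now rewrite Rmult_1_r in H.
Qed.

Lemma exp_weighted_deriv (f : R -> R) (c t l : R) : derivable_pt_lim f t l ->
  derivable_pt_lim (fun u => exp (c * u) * f u) t (exp (c * t) * (c * f t + l)).
Proof.
  intros H.
  assert (He : derivable_pt_lim (fun u => exp (c * u)) t (exp (c * t) * c)).
  { apply (derivable_pt_lim_comp (fun u => c * u) exp t c (exp (c * t)));
      [apply linear_deriv | apply derivable_pt_lim_exp]. }
  replace (exp (c * t) * (c * f t + l)) with (exp (c * t) * c * f t + exp (c * t) * l) by ring.
  exact (derivable_pt_lim_mult _ _ _ _ _ He H).
Qed.

Lemma continuous_induction (P : R -> Prop) (t : R) : 0 <= t -> P 0 ->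
  (forall s, 0 <= s <= t -> exists d, 0 < d /\ forall u v, 0 <= u <= s -> s <= v <= t ->
      s - u < d -> v - s < d -> P u -> P v) -> P t.
Proof.
  intros Ht P0 Hstep.
  set (E := fun x => 0 <= x <= t /\ P x).
  destruct (completeness E) as [c [Hub Hlub]].
  { exists t; intros x [Hx _]; lra. }
  { exists 0; split; [lra | exact P0]. }
  assert (Hc0 : 0 <= c) by (apply Hub; split; [lra | exact P0]).
  assert (Hct : c <= t) by (apply Hlub; intros x [Hx _]; lra).
  destruct (Hstep c (conj Hc0 Hct)) as [d [Hd Hprop]].
  assert (Hu : exists u, E u /\ c - d < u).
  { apply NNPP; intro Hn.
    assert (c <= c - d) by (apply Hlub; intros x Hx; apply Rnot_lt_le; intro; apply Hn; eauto).
    lra. }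
  destruct Hu as [u [[Hu1 Hu2] Hu3]].
  assert (Huc : u <= c) by (apply Hub; split; auto).
  destruct (Rlt_le_dec c t) as [Hlt|Hge].
  - exfalso. pose proof (Rmin_l t (c + d / 2)). pose proof (Rmin_r t (c + d / 2)).
    set (v := Rmin t (c + d / 2)) in *.
    assert (Hcv : c < v) by (unfold v; apply Rmin_glb_lt; lra).
    assert (E v) by (split; [lra | apply (Hprop u v); auto; lra]).
    assert (v <= c) by (apply Hub; auto). lra.
  - replace t with c by lra. apply (Hprop u c); auto; lra.
Qed.

(** The vector field [F]. *)

Lemma F_below (i : nat) (a z : nat -> R) (j : nat) : (j < i)%nat -> F i a z j = 0.
Proof.
  intros H. unfold F. now replace (j <? i)%nat with true by (symmetry; apply Nat.ltb_lt; lia).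
Qed.

Definition loss (i : nat) (a z : nat -> R) (k : nat) : R :=
  if (i <=? k)%nat then a k * z k else 0.

Lemma F_at (i : nat) (a z : nat -> R) :
  F i a z i = - a i * z i - series_sum (loss i a z).
Proof. unfold F. now rewrite Nat.ltb_irrefl, Nat.eqb_refl. Qed.

Lemma F_above (i : nat) (a z : nat -> R) (j : nat) : (i < j)%nat ->
  F i a z j = a (j - i)%nat * z (j - i)%nat - a j * z j.
Proof.
  intros H. unfold F.
  replace (j <? i)%nat with false by (symmetry; apply Nat.ltb_ge; lia).
  now replace (j =? i)%nat with false by (symmetry; apply Nat.eqb_neq; lia).
Qed.

(* Capped weights [min (j, N)]: their moments are finite sums whose time
   derivatives can be computed termwise. *)
Definition capped (N j : nat) : R := Rmin (INR j) (INR N).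

Lemma capped_nonneg (N j : nat) : 0 <= capped N j.
Proof. apply Rmin_glb; apply pos_INR. Qed.

Lemma capped_eq (N j : nat) : (j <= N)%nat -> capped N j = INR j.
Proof. intros; apply Rmin_left, le_INR; assumption. Qed.

Lemma capped_shift (N i k : nat) : 0 <= capped N (k + i) - capped N k <= INR i.
Proof.
  unfold capped. rewrite plus_INR. pose proof (pos_INR i). pose proof (pos_INR k).
  unfold Rmin. destruct (Rle_dec (INR k + INR i) (INR N)); destruct (Rle_dec (INR k) (INR N)); lra.
Qed.

Lemma weighted_F_sum (i : nat) (a z w : nat -> R) (m : nat) : (1 <= i)%nat ->
  (forall k, (k < i)%nat -> z k = 0) ->
  sum_f_R0 (fun j => w j * F i a z j) (m + i) =
  - w i * series_sum (loss i a z) + sum_f_R0 (fun k => w (k + i)%nat * loss i a z k) m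
  - sum_f_R0 (fun k => w k * loss i a z k) (m + i).
Proof.
  intros Hi Hz.
  assert (Hloss : forall k, loss i a z k = a k * z k).
  { intro k. unfold loss. destruct (i <=? k)%nat eqn:E; [reflexivity|].
    apply Nat.leb_gt in E. rewrite (Hz k E). ring. }
  induction m as [|m IH].
  - destruct i as [|i]; [lia|]. rewrite Nat.add_0_l, !tech5.
    rewrite (sum_eq_R0 (fun j => w j * F (S i) a z j)) by (intros j Hj; rewrite F_below by lia; ring).
    rewrite (sum_eq_R0 (fun k => w k * loss (S i) a z k))
      by (intros j Hj; unfold loss; replace (S i <=? j)%nat with false by (symmetry; apply Nat.leb_gt; lia); ring).
    simpl. rewrite F_at, !Hloss, (Hz 0%nat) by lia. ring.
  - replace (S m + i)%nat with (S (m + i)) by lia. simpl. rewrite IH, F_above by lia.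
    replace (S (m + i) - i)%nat with (S m) by lia. rewrite !Hloss. ring.
Qed.

Section LossBounds.

Variables (i : nat) (a : nat -> R) (A : R) (z : nat -> R).
Hypothesis Hi : (1 <= i)%nat.
Hypothesis HA : 0 < A.
Hypothesis Ha : forall j, (1 <= j)%nat -> 0 < a j /\ a j <= A * INR j.
Hypothesis Hz : forall k, 0 <= z k.
Hypothesis HzX : X11 z.

Lemma loss_nonneg (k : nat) : 0 <= loss i a z k.
Proof.
  unfold loss. destruct (i <=? k)%nat eqn:E; [|lra].
  apply Nat.leb_le in E. apply Rmult_le_pos; [left; apply Ha; lia | apply Hz].
Qed.

Lemma loss_le_moment (k : nat) : loss i a z k <= A * moment z k.
Proof.
  unfold loss, moment. rewrite (Rabs_right (z k)) by (apply Rle_ge, Hz).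
  destruct (i <=? k)%nat eqn:E.
  - apply Nat.leb_le in E. rewrite <- Rmult_assoc.
    apply Rmult_le_compat_r; [apply Hz | apply Ha; lia].
  - pose proof (pos_INR k). pose proof (Hz k).
    apply Rmult_le_pos; [lra | now apply Rmult_le_pos].
Qed.

Lemma loss_summable : infinite_sum (loss i a z) (series_sum (loss i a z)).
Proof.
  pose proof (infinite_sum_scal A _ _ (norm11_spec _ HzX)) as HAs.
  destruct (nonneg_series_bounded (loss i a z) (A * norm11 z) loss_nonneg) as [l Hl].
  - intro n. apply Rle_trans with (sum_f_R0 (fun k => A * moment z k) n).
    + apply sum_Rle. intros k _. apply loss_le_moment.
    + apply (sum_incr _ n _ HAs). intro k. pose proof (moment_nonneg z k).
      apply Rmult_le_pos; lra.
  - now rewrite (series_sum_spec _ _ Hl).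
Qed.

Lemma loss_tail_le (n : nat) :
  series_sum (loss i a z) - sum_f_R0 (loss i a z) n <= A * tail n z.
Proof.
  pose proof (infinite_sum_tail_le _ _ _ _ n loss_le_moment loss_summable
    (infinite_sum_scal A _ _ (norm11_spec _ HzX))) as H.
  rewrite sum_scal_l in H. unfold tail. lra.
Qed.

Lemma F_at_bound : F i a z i <= - a i * z i - a (2 * i)%nat * z (2 * i)%nat.
Proof.
  pose proof (term_le_partial_sum _ (2 * i) loss_nonneg) as H1.
  pose proof (sum_incr _ (2 * i) _ loss_summable loss_nonneg) as H2.
  unfold loss at 1 in H1.
  replace (i <=? 2 * i)%nat with true in H1 by (symmetry; apply Nat.leb_le; lia).
  rewrite F_at. lra.
Qed.

Hypothesis Hzlow : forall k, (k < i)%nat -> z k = 0.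

Lemma capped_flux_nonpos (N m : nat) : (i <= N)%nat ->
  sum_f_R0 (fun j => capped N j * F i a z j) (m + i) <= 0.
Proof.
  intros HN. rewrite (weighted_F_sum i a z (capped N) m Hi Hzlow), (capped_eq N i HN).
  set (B := loss i a z).
  assert (Hshift : sum_f_R0 (fun k => capped N (k + i)%nat * B k) m
                   - sum_f_R0 (fun k => capped N k * B k) m <= INR i * sum_f_R0 B m).
  { rewrite <- minus_sum, <- sum_scal_l. apply sum_Rle. intros k _.
    pose proof (capped_shift N i k). pose proof (loss_nonneg k). unfold B. nra. }
  assert (Hmono : sum_f_R0 (fun k => capped N k * B k) m
                  <= sum_f_R0 (fun k => capped N k * B k) (m + i)).
  { apply partial_sum_mono; [|lia]. intro k.
    apply Rmult_le_pos; [apply capped_nonneg | apply loss_nonneg]. }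
  pose proof (sum_incr _ m _ loss_summable loss_nonneg). pose proof (pos_INR i).
  unfold B in *. nra.
Qed.

Lemma capped_flux_lower (N m : nat) : (i <= N)%nat -> (N <= m)%nat ->
  - INR i * A * tail (N - i) z - INR N * A * tail m z
  <= sum_f_R0 (fun j => capped N j * F i a z j) (m + i).
Proof.
  intros HN Hm. rewrite (weighted_F_sum i a z (capped N) m Hi Hzlow), (capped_eq N i HN).
  set (B := loss i a z).
  (* the gain exceeds the loss by at least [i] times the first [N-i+1] losses *)
  assert (Hshift : INR i * sum_f_R0 B (N - i) <=
      sum_f_R0 (fun k => capped N (k + i)%nat * B k) m - sum_f_R0 (fun k => capped N k * B k) m).
  { rewrite <- minus_sum, <- sum_scal_l.
    rewrite <- (partial_sum_truncate (fun k => INR i * B k) (N - i) m) by lia.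
    apply sum_Rle. intros k _. pose proof (capped_shift N i k). pose proof (loss_nonneg k).
    destruct (k <=? N - i)%nat eqn:E; [|unfold B in *; nra].
    apply Nat.leb_le in E. rewrite !capped_eq, plus_INR by lia. lra. }
  (* the extra losses of indices [m+1 .. m+i] are weighted by at most [N] *)
  assert (Hextra : sum_f_R0 (fun k => capped N k * B k) (m + i)
                   - sum_f_R0 (fun k => capped N k * B k) m
                   <= INR N * (sum_f_R0 B (m + i) - sum_f_R0 B m)).
  { pose proof (partial_sum_mono (fun k => INR N * B k - capped N k * B k) m (m + i)) as H.
    rewrite !minus_sum, !sum_scal_l in H.
    assert (forall k, 0 <= INR N * B k - capped N k * B k).
    { intro k. pose proof (Rmin_r (INR k) (INR N)). pose proof (loss_nonneg k).
      unfold capped, B in *. nra. }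
    specialize (H ltac:(assumption) ltac:(lia)). lra. }
  pose proof (loss_tail_le (N - i)). pose proof (loss_tail_le m).
  pose proof (sum_incr _ (m + i) _ loss_summable loss_nonneg).
  pose proof (pos_INR i). pose proof (pos_INR N).
  unfold B in *. nra.
Qed.

End LossBounds.

Lemma capped_sum_le_norm11 (N L : nat) (z : nat -> R) : X11 z -> (forall k, 0 <= z k) ->
  sum_f_R0 (fun j => capped N j * z j) L <= norm11 z.
Proof.
  intros HX Hz. apply Rle_trans with (sum_f_R0 (moment z) L).
  - apply sum_Rle. intros j _. unfold moment. rewrite Rabs_right by (apply Rle_ge, Hz).
    apply Rmult_le_compat_r; [apply Hz | apply Rmin_l].
  - apply (sum_incr _ L _ (norm11_spec _ HX) (moment_nonneg z)).
Qed.

Lemma partial_moment_le_capped_sum (N L : nat) (z : nat -> R) : (N <= L)%nat ->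
  (forall k, 0 <= z k) -> sum_f_R0 (moment z) N <= sum_f_R0 (fun j => capped N j * z j) L.
Proof.
  intros HL Hz. rewrite <- (partial_sum_truncate (moment z) N L HL). apply sum_Rle. intros j _.
  destruct (j <=? N)%nat eqn:E.
  - apply Nat.leb_le in E. unfold moment. rewrite Rabs_right, capped_eq by (auto; apply Rle_ge, Hz).
    lra.
  - apply Rmult_le_pos; [apply capped_nonneg | apply Hz].
Qed.

(** Properties of the solution. *)

Section Solution.

Variables (i : nat) (a : nat -> R) (A : R) (y0 : nat -> R) (y : R -> nat -> R).
Hypothesis Hi : (1 <= i)%nat.
Hypothesis HA : 0 < A.
Hypothesis Ha : forall j, (1 <= j)%nat -> 0 < a j /\ a j <= A * INR j.
Hypothesis Hy0 : X1i_pos i y0.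
Hypothesis Hsol : is_solution i a y0 y.

Lemma sol_init : y 0 = y0.
Proof. apply Hsol. Qed.

Lemma sol_X11 (t : R) : 0 <= t -> X11 (y t).
Proof. intros Ht. apply (proj1 (proj2 Hsol) t Ht). Qed.

Lemma sol_below (t : R) (k : nat) : 0 <= t -> (k < i)%nat -> y t k = 0.
Proof. intros Ht. apply (proj1 (proj2 Hsol) t Ht). Qed.

Lemma sol_deriv (j : nat) (t : R) : 0 < t ->
  derivable_pt_lim (fun u => y u j) t (F i a (y t) j).
Proof.
  destruct Hsol as (_ & _ & _ & Hd & _).
  exact (deriv_nonneg_interior _ (fun u => F i a (y u) j) t (Hd j)).
Qed.

Lemma sol_cont (j : nat) : cont_nonneg (fun t => y t j).
Proof. destruct Hsol as (_ & _ & _ & Hd & _). exact (deriv_nonneg_continuous _ _ (Hd j)). Qed.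

Lemma sol_F_cont (j : nat) : cont_nonneg (fun t => F i a (y t) j).
Proof. destruct Hsol as (_ & _ & _ & _ & HF). apply HF. Qed.

Lemma sol_near_init (j : nat) (t e : R) : 0 < t -> 0 < e ->
  exists s, 0 < s < t /\ Rabs (y s j - y0 j) < e.
Proof.
  intros Ht He. rewrite <- sol_init. exact (right_of_zero _ t Ht (sol_cont j 0 (Rle_refl 0) e He)).
Qed.

Lemma sol_near_init_norm (t e : R) : 0 < t -> 0 < e ->
  exists s, 0 < s < t /\ norm11 (vsub (y s) y0) < e.
Proof.
  intros Ht He. rewrite <- sol_init.
  destruct Hsol as (_ & _ & Hc & _). exact (right_of_zero _ t Ht (Hc 0 (Rle_refl 0) e He)).
Qed.

(* Integrating factor: for [j > i], [exp (a_j t) y_j(t)] has derivative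
   [exp (a_j t) a_{j-i} y_{j-i}(t)], so it grows wherever [y_{j-i} >= 0]. *)
Lemma exp_weighted_sol_deriv (j : nat) (c : R) : (i < j)%nat -> 0 < c ->
  derivable_pt_lim (fun x => exp (a j * x) * y x j) c
    (exp (a j * c) * (a (j - i)%nat * y c (j - i)%nat)).
Proof.
  intros Hj Hc. pose proof (exp_weighted_deriv _ (a j) c _ (sol_deriv j c Hc)) as H.
  rewrite F_above in H by exact Hj.
  replace (a j * y c j + (a (j - i)%nat * y c (j - i)%nat - a j * y c j))
    with (a (j - i)%nat * y c (j - i)%nat) in H by ring. exact H.
Qed.

Lemma exp_weighted_mono (j : nat) (s u : R) : (i < j)%nat -> 0 < s < u ->
  (forall x, s < x < u -> 0 <= y x (j - i)%nat) ->
  exp (a j * s) * y s j <= exp (a j * u) * y u j.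
Proof.
  intros Hj Hsu Hp. apply (nondecreasing_of_deriv (fun x => exp (a j * x) * y x j)
    (fun x => exp (a j * x) * (a (j - i)%nat * y x (j - i)%nat)) s u ltac:(lra)).
  - intros c Hc. apply exp_weighted_sol_deriv; [exact Hj | lra].
  - intros c Hc. apply Rmult_le_pos; [left; apply exp_pos|].
    apply Rmult_le_pos; [left; apply Ha; lia | now apply Hp].
Qed.

Lemma exp_weighted_incr (j : nat) (s u : R) : (i < j)%nat -> 0 < s < u ->
  (forall x, s < x < u -> 0 < y x (j - i)%nat) ->
  exp (a j * s) * y s j < exp (a j * u) * y u j.
Proof.
  intros Hj Hsu Hp. apply (increasing_of_deriv (fun x => exp (a j * x) * y x j)
    (fun x => exp (a j * x) * (a (j - i)%nat * y x (j - i)%nat)) s u ltac:(lra)).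
  - intros c Hc. apply exp_weighted_sol_deriv; [exact Hj | lra].
  - intros c Hc. apply Rmult_lt_0_compat; [apply exp_pos|].
    apply Rmult_lt_0_compat; [apply Ha; lia | now apply Hp].
Qed.

Lemma capped_moment_deriv (N L : nat) (c : R) : 0 < c ->
  derivable_pt_lim (fun v => sum_f_R0 (fun j => capped N j * y v j) L) c
    (sum_f_R0 (fun j => capped N j * F i a (y c) j) L).
Proof.
  intros Hc. apply (weighted_sum_deriv y (fun j => F i a (y c) j)).
  intro j. now apply sol_deriv.
Qed.

(* The tails of [y(u)] are small uniformly for [u] in a compact interval:
   by continuity of [y] in [X_{1,1}] and continuous induction. *)
Lemma uniform_tails (t e : R) : 0 <= t -> 0 < e ->
  exists N0, forall u, 0 <= u <= t -> forall n, (N0 <= n)%nat -> tail n (y u) <= e.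
Proof.
  intros Ht He. apply (continuous_induction
    (fun s => exists N0, forall u, 0 <= u <= s -> forall n, (N0 <= n)%nat -> tail n (y u) <= e) t Ht).
  - destruct (tail_eventually_small (y 0) e (sol_X11 0 (Rle_refl 0)) He) as [N HN].
    exists N. intros u Hu. now replace u with 0 by lra.
  - intros s Hs.
    destruct (tail_eventually_small (y s) (e / 2) (sol_X11 s ltac:(lra)) ltac:(lra)) as [Ns HNs].
    destruct Hsol as (_ & _ & Hc & _).
    destruct (Hc s ltac:(lra) (e / 2) ltac:(lra)) as [d [Hd Hclose]].
    exists d. split; [exact Hd|]. intros v w Hv Hw Hvd Hwd [Nv HNv].
    exists (Nv + Ns)%nat. intros u Hu n Hn.
    destruct (Rle_dec u v) as [Huv|Huv]; [apply HNv; [lra | lia]|].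
    specialize (Hclose u ltac:(lra) ltac:(apply Rabs_def1; lra)).
    pose proof (tail_triangle (y u) (y s) n (sol_X11 u ltac:(lra)) (sol_X11 s ltac:(lra))).
    specialize (HNs n ltac:(lia)). unfold vsub in *. lra.
Qed.

Section NonnegativeMonomers.

Variable T : R.
Hypothesis HyiT : forall u, 0 <= u <= T -> 0 <= y u i.

(* All components stay nonnegative: by induction on [j], since
   [exp (a_j t) y_j(t)] is nondecreasing once [y_{j-i} >= 0]. *)
Lemma nonneg_upto (j : nat) (u : R) : 0 <= u <= T -> 0 <= y u j.
Proof.
  revert u. induction j as [j IH] using lt_wf_ind. intros u Hu.
  destruct (lt_eq_lt_dec j i) as [[Hlt| ->]|Hgt].
  - rewrite sol_below by (lra || exact Hlt). lra.
  - now apply HyiT.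
  - destruct (Req_dec u 0) as [->|Hu0]; [rewrite sol_init; apply Hy0|].
    apply Rnot_lt_le. intro Hneg.
    destruct (sol_near_init j u (- y u j) ltac:(lra) ltac:(lra)) as [s [Hs Hclose]].
    pose proof (exp_weighted_mono j s u Hgt Hs
      (fun x Hx => IH (j - i)%nat ltac:(lia) x ltac:(lra))) as Hmono.
    (* hence [y_j(s) <= exp (a_j (u - s)) y_j(u) <= y_j(u)] ... *)
    assert (Hexp : exp (a j * u) = exp (a j * s) * exp (a j * (u - s)))
      by (rewrite <- exp_plus; f_equal; ring).
    rewrite Hexp, Rmult_assoc in Hmono.
    apply Rmult_le_reg_l in Hmono; [|apply exp_pos].
    assert (Hgrow : 1 <= exp (a j * (u - s))).
    { pose proof (exp_ineq1_le (a j * (u - s))). pose proof (proj1 (Ha j ltac:(lia))).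
      pose proof (Rmult_le_pos (a j) (u - s) ltac:(lra) ltac:(lra)). lra. }
    (* ... while [y_j(s)] is close to [y_j(0) >= 0] *)
    apply Rabs_def2 in Hclose. pose proof (proj2 Hy0 j). nra.
Qed.

Lemma pos_upto (j : nat) (u : R) : (i < j)%nat -> 0 < y0 j -> 0 <= u <= T -> 0 < y u j.
Proof.
  intros Hj Hj0 Hu. destruct (Req_dec u 0) as [->|Hu0]; [now rewrite sol_init|].
  destruct (sol_near_init j u (y0 j) ltac:(lra) Hj0) as [s [Hs Hclose]].
  apply Rabs_def2 in Hclose.
  pose proof (exp_weighted_mono j s u Hj Hs (fun x Hx => nonneg_upto (j - i)%nat x ltac:(lra))).
  pose proof (exp_pos (a j * s)). pose proof (exp_pos (a j * u)). nra.
Qed.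

Lemma pos_from_predecessor (j : nat) (s u : R) : (i < j)%nat -> 0 < s < u -> u <= T ->
  (forall x, s < x < u -> 0 < y x (j - i)%nat) -> 0 < y u j.
Proof.
  intros Hj Hsu HuT Hp. pose proof (exp_weighted_incr j s u Hj Hsu Hp).
  pose proof (nonneg_upto j s ltac:(lra)).
  pose proof (exp_pos (a j * s)). pose proof (exp_pos (a j * u)). nra.
Qed.

Lemma multiple_step (k : nat) (s u : R) : (1 <= k)%nat -> 0 < s < u -> u <= T ->
  (forall x, s < x < u -> 0 < y x (k * i)%nat) -> 0 < y u (S k * i)%nat.
Proof.
  intros Hk Hsu HuT Hp. apply (pos_from_predecessor _ s); [nia | lra | lra |].
  now replace (S k * i - i)%nat with (k * i)%nat by lia.
Qed.

Lemma multiples_pos (k : nat) (u : R) : (forall x, 0 <= x < T -> 0 < y x i) ->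
  (2 <= k)%nat -> 0 < u <= T -> 0 < y u (k * i)%nat.
Proof.
  intros Hpos Hk Hu.
  assert (Hinterior : forall k x, (1 <= k)%nat -> 0 < x < T -> 0 < y x (k * i)%nat).
  { intros k' x Hk'. revert x. induction Hk' as [|k' Hk' IH]; intros x Hx.
    - rewrite Nat.mul_1_l. apply Hpos. lra.
    - apply (multiple_step k' (x / 2)); [exact Hk' | lra | lra |].
      intros x' Hx'. apply IH. lra. }
  destruct k as [|k]; [lia|].
  apply (multiple_step k (u / 2)); [lia | lra | lra |].
  intros x Hx. apply Hinterior; [lia | lra].
Qed.

(* Conservation of [norm11]: the capped moments do not increase, which bounds
   [norm11] from above in the limit [N -> oo]; their decrease is controlled by
   the tails of [y], which are uniformly small, giving the reverse bound. *)
Lemma capped_moment_nonincreasing (N m : nat) (s t : R) : (i <= N)%nat -> 0 < s < t -> t <= T ->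
  sum_f_R0 (fun j => capped N j * y t j) (m + i) <= sum_f_R0 (fun j => capped N j * y s j) (m + i).
Proof.
  intros HN Hst HtT.
  pose proof (nondecreasing_of_deriv (fun v => - sum_f_R0 (fun j => capped N j * y v j) (m + i))
    (fun v => - sum_f_R0 (fun j => capped N j * F i a (y v) j) (m + i)) s t ltac:(lra)) as H.
  cbv beta in H. enough (- sum_f_R0 (fun j => capped N j * y s j) (m + i)
    <= - sum_f_R0 (fun j => capped N j * y t j) (m + i)) by lra. apply H.
  - intros c Hc. apply (derivable_pt_lim_opp (fun v => sum_f_R0 (fun j => capped N j * y v j) (m + i))).
    apply capped_moment_deriv. lra.
  - intros c Hc. enough (sum_f_R0 (fun j => capped N j * F i a (y c) j) (m + i) <= 0) by lra.
    apply (capped_flux_nonpos i a A (y c) Hi HA Ha (fun k => nonneg_upto k c ltac:(lra))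
      (sol_X11 c ltac:(lra)) (fun k Hk => sol_below c k ltac:(lra) Hk) N m HN).
Qed.

(* Letting [N -> oo] in the capped moments, [norm11] cannot increase from
   times close to 0, where it is close to [norm11 y0]. *)
Lemma norm_nonincreasing (t : R) : 0 < t <= T -> norm11 (y t) <= norm11 y0.
Proof.
  intros Ht. apply Rnot_lt_le. intro Hlt.
  destruct (sol_near_init_norm t ((norm11 (y t) - norm11 y0) / 2) ltac:(lra) ltac:(lra))
    as [s [Hs Hclose]].
  pose proof (norm11_triangle (y s) y0 (sol_X11 s ltac:(lra)) (proj1 (proj1 Hy0))).
  assert (Hts : norm11 (y t) <= norm11 (y s)).
  { apply (Rle_cv_lim (Un := fun n => sum_f_R0 (moment (y t)) (n + i)) (Vn := fun _ => norm11 (y s))).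
    - intro n. apply Rle_trans with (sum_f_R0 (fun j => capped (n + i) j * y t j) (n + i + i)).
      { apply partial_moment_le_capped_sum; [lia | intro k; apply nonneg_upto; lra]. }
      apply Rle_trans with (sum_f_R0 (fun j => capped (n + i) j * y s j) (n + i + i)).
      { apply capped_moment_nonincreasing; lia || lra. }
      apply capped_sum_le_norm11; [apply sol_X11; lra | intro k; apply nonneg_upto; lra].
    - exact (CV_shift' _ i _ (norm11_spec _ (sol_X11 t ltac:(lra)))).
    - apply Un_cv_const. }
  lra.
Qed.

Lemma capped_moment_lower_drift (N m : nat) (s t e1 e2 : R) :
  (i <= N)%nat -> (N <= m)%nat -> 0 < s < t -> t <= T ->
  (forall x, s <= x <= t -> tail (N - i) (y x) <= e1 /\ tail m (y x) <= e2) ->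
  sum_f_R0 (fun j => capped N j * y s j) (m + i) - (INR i * A * e1 + INR N * A * e2) * (t - s)
  <= sum_f_R0 (fun j => capped N j * y t j) (m + i).
Proof.
  intros HN Hm Hst HtT Htails. set (c := INR i * A * e1 + INR N * A * e2).
  pose proof (nondecreasing_of_deriv
    (fun v => sum_f_R0 (fun j => capped N j * y v j) (m + i) + c * v)
    (fun v => sum_f_R0 (fun j => capped N j * F i a (y v) j) (m + i) + c) s t ltac:(lra)) as H.
  cbv beta in H. enough (sum_f_R0 (fun j => capped N j * y s j) (m + i) + c * s
    <= sum_f_R0 (fun j => capped N j * y t j) (m + i) + c * t) by nra. apply H.
  - intros x Hx. apply (derivable_pt_lim_plus (fun v => sum_f_R0 (fun j => capped N j * y v j) (m + i))
      (fun v => c * v)); [apply capped_moment_deriv; lra | apply linear_deriv].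
  - intros x Hx. destruct (Htails x ltac:(lra)) as [T1 T2].
    pose proof (capped_flux_lower i a A (y x) Hi HA Ha (fun k => nonneg_upto k x ltac:(lra))
      (sol_X11 x ltac:(lra)) (fun k Hk => sol_below x k ltac:(lra) Hk) N m HN Hm).
    pose proof (pos_INR i). pose proof (pos_INR N).
    assert (INR i * A * tail (N - i) (y x) <= INR i * A * e1)
      by (apply Rmult_le_compat_l; [nra | exact T1]).
    assert (INR N * A * tail m (y x) <= INR N * A * e2)
      by (apply Rmult_le_compat_l; [nra | exact T2]).
    unfold c. lra.
Qed.

(* With uniformly small tails, [norm11] can decrease only by an arbitrarily
   small amount ... *)
Lemma norm_almost_nondecreasing (t e : R) : 0 < t <= T -> 0 < e ->
  norm11 y0 <= norm11 (y t) + e * (2 + (INR i * A + 1) * t).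
Proof.
  intros Ht He.
  destruct (uniform_tails t e ltac:(lra) He) as [N0 HN0]. set (N := (N0 + i)%nat).
  assert (HNpos : 0 < INR N) by (apply lt_0_INR; unfold N; lia).
  assert (HNA : 0 < INR N * A) by (apply Rmult_lt_0_compat; lra).
  destruct (uniform_tails t (e / (INR N * A)) ltac:(lra) ltac:(apply Rdiv_lt_0_compat; lra))
    as [M HM]. set (m := (N + M)%nat).
  destruct (sol_near_init_norm t e ltac:(lra) He) as [s [Hs Hclose]].
  pose proof (capped_moment_lower_drift N m s t e (e / (INR N * A)) ltac:(unfold N; lia)
    ltac:(unfold m; lia) Hs ltac:(lra)
    ltac:(intros x Hx; split; [apply HN0 | apply HM]; lra || (unfold N, m; lia))) as Hdrift.
  replace (INR N * A * (e / (INR N * A))) with e in Hdrift by (field; split; lra).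
  pose proof (capped_sum_le_norm11 N (m + i) (y t) (sol_X11 t ltac:(lra))
    (fun k => nonneg_upto k t ltac:(lra))).
  pose proof (partial_moment_le_capped_sum N (m + i) (y s) ltac:(unfold m; lia)
    (fun k => nonneg_upto k s ltac:(lra))).
  assert (Htail : tail N (y s) <= e) by (apply HN0; [lra | unfold N; lia]). unfold tail in Htail.
  pose proof (norm11_triangle y0 (y s) (proj1 (proj1 Hy0)) (sol_X11 s ltac:(lra))).
  rewrite norm11_vsub_sym in Hclose.
  pose proof (pos_INR i). assert (0 <= INR i * A * e) by (repeat apply Rmult_le_pos; lra).
  nra.
Qed.

Lemma norm_nondecreasing (t : R) : 0 < t <= T -> norm11 y0 <= norm11 (y t).
Proof.
  intros Ht. apply Rnot_lt_le. intro Hlt.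
  set (K := 2 + (INR i * A + 1) * t).
  assert (HK : 0 < K).
  { pose proof (Rmult_le_pos (INR i) A (pos_INR i) ltac:(lra)). unfold K. nra. }
  pose proof (norm_almost_nondecreasing t ((norm11 y0 - norm11 (y t)) / (2 * K)) Ht
    ltac:(apply Rdiv_lt_0_compat; lra)) as H.
  fold K in H. replace ((norm11 y0 - norm11 (y t)) / (2 * K) * K)
    with ((norm11 y0 - norm11 (y t)) / 2) in H by (field; lra). lra.
Qed.

Lemma mass_conserved (t : R) : 0 <= t <= T -> norm11 (y t) = norm11 y0.
Proof.
  intros Ht. destruct (Req_dec t 0) as [->|Ht0]; [now rewrite sol_init|].
  apply Rle_antisym; [apply norm_nonincreasing | apply norm_nondecreasing]; lra.
Qed.

End NonnegativeMonomers.

Definition regular (t : R) : Prop :=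
  (0 < t -> forall k, (2 <= k)%nat -> 0 < y t (k * i)%nat) /\
  (forall j, 0 <= y t j) /\
  (forall j, (i + 1 <= j)%nat -> 0 < y0 j -> 0 < y t j) /\
  norm11 (y t) = norm11 y0.

Lemma regular_upto (T : R) : (forall u, 0 <= u < T -> 0 < y u i) -> 0 <= y T i ->
  forall t, 0 <= t <= T -> regular t.
Proof.
  intros Hpos HyT t Ht.
  assert (HyiT : forall u, 0 <= u <= T -> 0 <= y u i).
  { intros u Hu. destruct (Rlt_le_dec u T); [left; apply Hpos; lra | now replace u with T by lra]. }
  split; [intros Ht0 k Hk; apply (multiples_pos T HyiT); auto; lra|].
  split; [intro j; now apply (nonneg_upto T HyiT)|].
  split; [intros j Hj Hj0; apply (pos_upto T HyiT); auto; lia|].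
  now apply (mass_conserved T HyiT).
Qed.

Lemma dyi_negative (t : R) : 0 <= t -> regular t -> 0 < y t i \/ 0 < y t (2 * i)%nat ->
  F i a (y t) i < 0.
Proof.
  intros Ht (_ & Hnn & _ & _) Hpos.
  pose proof (F_at_bound i a A (y t) Hi HA Ha Hnn (sol_X11 t Ht)).
  pose proof (proj1 (Ha i Hi)). pose proof (proj1 (Ha (2 * i)%nat ltac:(lia))).
  pose proof (Hnn i). pose proof (Hnn (2 * i)%nat). destruct Hpos; nra.
Qed.

(* At a first zero [c] of [y_i], [y_{2i}(c) > 0] forces [dy_i/dt < 0] on a
   neighbourhood [[c, c + d)]. *)
Lemma dyi_negative_after (c : R) : 0 < c -> regular c -> y c i = 0 ->
  exists d, 0 < d /\ forall t, c <= t < c + d -> F i a (y t) i < 0.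
Proof.
  intros Hc Hreg Hzero.
  assert (Hneg : F i a (y c) i < 0).
  { apply dyi_negative; [lra | exact Hreg |]. right. apply (proj1 Hreg Hc 2%nat (le_n 2)). }
  destruct (cont_nonneg_neg_near _ c (sol_F_cont i) ltac:(lra) Hneg)
    as [d [Hd Hnear]].
  exists d. split; [exact Hd|]. intros t Ht. apply Hnear; [lra | apply Rabs_def1; lra].
Qed.

End Solution.

(* Proposition 2.3: [t_*] is the first zero of [y_i], or [+oo] if there is
   none; then [t_{*,1}] is [+oo], and otherwise [t_* + d] for a [d > 0] such
   that [dy_i/dt < 0] on [[t_*, t_* + d)]. *)
Theorem proposition2p3 (i : nat) (a : nat -> R) (A : R)
  (y0 : nat -> R) (y : R -> nat -> R) :
  (1 <= i)%nat ->
  0 < A ->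
  (forall j, (1 <= j)%nat -> 0 < a j /\ a j <= A * INR j) ->
  X1i_pos i y0 ->
  0 < y0 i ->
  is_solution i a y0 y ->
  exists (ts ts1 : option R),
    (match ts with Some s => 0 < s | None => True end) /\
    ext_le ts ts1 /\
    (forall t, 0 <= t -> before ts t -> 0 < y t i) /\
    (forall s, ts = Some s -> y s i = 0) /\
    (forall t, 0 < t -> before ts t ->
       forall k, (2 <= k)%nat -> 0 < y t (k * i)%nat) /\
    (forall t, 0 <= t -> before ts t ->
       forall j, (i + 1 <= j)%nat -> 0 <= y t j) /\
    (forall t, 0 <= t -> before ts t ->
       forall j, (i + 1 <= j)%nat -> 0 < y0 j -> 0 < y t j) /\
    (forall t, 0 <= t -> before ts1 t -> F i a (y t) i < 0) /\
    (forall t, 0 <= t -> before ts t -> norm11 (y t) = norm11 y0) /\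
    (forall s, ts = Some s ->
       before ts1 s /\
       (forall k, (2 <= k)%nat -> 0 < y s (k * i)%nat) /\
       (forall j, (i + 1 <= j)%nat -> 0 <= y s j) /\
       (forall j, (i + 1 <= j)%nat -> 0 < y0 j -> 0 < y s j) /\
       norm11 (y s) = norm11 y0).
Proof.
  intros Hi HA Ha Hy0 Hy0i Hsol.
  pose proof (regular_upto i a A y0 y Hi HA Ha Hy0 Hsol) as Hreg_upto.
  pose proof (dyi_negative i a A y0 y Hi HA Ha Hsol) as Hneg.
  rewrite <- (sol_init i a y0 y Hsol) in Hy0i.
  destruct (first_zero (fun t => y t i) (sol_cont i a y0 y Hsol i) Hy0i)
    as [Hpos | (c & Hc & Hzero & Hpos)].
  -
    assert (Hreg : forall t, 0 <= t -> regular i y0 y t)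
      by (intros t Ht; apply (Hreg_upto t); [intros; apply Hpos | left; apply Hpos |]; lra).
    exists None, None; cbn.
    repeat split; intros; try discriminate; try (apply Hpos; lra).
    all: try match goal with |- F _ _ (_ ?t) _ < 0 =>
      apply Hneg; [lra | apply Hreg; lra | left; apply Hpos; lra] end.
    all: destruct (Hreg t ltac:(lra)) as (Hk & Hnn & Hp & Hm); auto.
  -
    assert (Hreg : forall t, 0 <= t <= c -> regular i y0 y t)
      by (apply Hreg_upto; [exact Hpos | lra]).
    destruct (dyi_negative_after i a A y0 y Hi HA Ha Hsol c Hc (Hreg c ltac:(lra)) Hzero)
      as (d & Hd & Hafter).
    exists (Some c), (Some (c + d)); cbn.
    repeat split; intros;
      try match goal with H : Some _ = Some _ |- _ => injection H as <- end;
      try exact Hzero; try (apply Hpos; lra); try lra.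
    (* [dy_i/dt < 0] before [c] since [y_i > 0] there, and on [[c, c + d)] *)
    all: try match goal with |- F _ _ (_ ?t) _ < 0 =>
      destruct (Rlt_le_dec t c);
        [apply Hneg; [lra | apply Hreg; lra | left; apply Hpos; lra] | apply Hafter; lra] end.
    all: first [ destruct (Hreg t ltac:(lra)) as (Hk & Hnn & Hp & Hm)
               | destruct (Hreg c ltac:(lra)) as (Hk & Hnn & Hp & Hm) ]; auto.
Qed.
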